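(* In REFORM with the RPTSC reward scheme with at most $k=2$ pairings, in the setting described in the context, suppose all agents other than $a_i$ play the trustworthy strategy, and suppose Assumption $\mathsf{A}_1$ holds for $a_i$ reporting at time $t_i$: $$\overline{Ref}_i(\alpha)-\alpha\beta(t_i)\ \ge\ c(e_H)-c(e_L).$$ Then $a_i$'s ex-ante expected utility from exerting high effort exceeds that from reporting randomly at the same time: $$\overline{Ref}_i(\alpha)-c(e_H)\ >\ \overline{E}_{ra}-c(e_L),\qquad\text{where } \overline{E}_{ra}=\sum_{y\in\mathcal{X}}p_y\,\alpha r\beta(t_i)(1-p_y)\left(1-(1-p_y)^{n-1}\right).$$
   Context: Setting. In each round there are $n\ge 2$ statistically independent, a-priori similar tasks with common finite answer space $\mathcal{X}$. An agent exerts high effort $e_H$ (cost $c(e_H)$), obtaining an evaluation $x_i\in\mathcal{X}$, or low effort $e_L$ (cost $c(e_L)<c(e_H)$), obtaining no evaluation and reporting randomly according to its prior. Trustworthy strategy: high effort, report the true evaluation. A decay factor $\beta(t)>0$, decreasing in $t$, multiplies rewards. REFORM with RPTSC reward uses a scale $\alpha>0$; utility is reward minus effort cost. Beliefs. $p_x=P_p(x)\in(0,1)$ is the prior probability that a peer's evaluation is $x$, and $p'_x=P_{p|i}(x\mid x_i=x)\in(0,1)$ is the posterior probability that a peer's evaluation is $x$ given that $a_i$'s evaluation is $x$. $r\in[0,1]$ is $a_i$'s belief that a random peer's TERM score is below its own. Ex-ante expected reward of a trustworthy agent (before evaluation, all others trustworthy): $$\overline{Ref}_i(\alpha)=\alpha\beta(t_i)\sum_{x\in\mathcal{X}}p_x\left[\left(\frac{p'_x}{p_x}-1+r\,p'_x\frac{1-p'_x}{p_x}\right)\left(1-(1-p_x)^{n-1}\right)\right].$$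 The expected reward of a random agent reporting $y$ (all others trustworthy) is $\alpha r\beta(t_i)(1-p_y)\left(1-(1-p_y)^{n-1}\right)$, and it reports $y$ with probability $p_y$. *)

From mathcomp Require Import all_boot all_order all_algebra.
Set Implicit Arguments. Unset Strict Implicit. Unset Printing Implicit Defensive.
Import Order.TTheory GRing.Theory Num.Theory.
Local Open Scope ring_scope.

Definition RefBar (R : realFieldType) (X : finType) (p p' : X -> R)
  (n : nat) (r alpha beta_t : R) : R :=
  alpha * beta_t * \sum_(x : X) p x *
    ((p' x / p x - 1 + r * p' x * (1 - p' x) / p x) * (1 - (1 - p x) ^+ n.-1)).

Definition EraBar (R : realFieldType) (X : finType) (p : X -> R)
  (n : nat) (r alpha beta_t : R) : R :=
  \sum_(y : X) p y * (alpha * r * beta_t * (1 - p y) * (1 - (1 - p y) ^+ n.-1)).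

From mathcomp Require Import all_boot all_order all_algebra.
From mathcomp Require Import ring lra.
Import Order.TTheory GRing.Theory Num.Theory.
Local Open Scope ring_scope.

(* A random reporter is paid at most [alpha beta] times a weighted average, with
   weights [p y], of factors [r (1 - p y) (1 - (1 - p y)^(n-1))] that are all
   strictly below 1; hence its expected reward is strictly below [alpha beta].
   Assumption A_1 says the trustworthy reward exceeds [alpha beta] by at least the
   extra effort cost, which closes the gap. *)

Lemma random_report_factor_lt1 (R : realDomainType) (r q : R) (m : nat) :
  0 <= r <= 1 -> 0 < q <= 1 -> r * (1 - q) * (1 - (1 - q) ^+ m) < 1.
Proof.
move=> /andP[r_ge0 r_le1] /andP[q_gt0 q_le1].
have a_ge0 : 0 <= 1 - q by rewrite subr_ge0.
have am_ge0 : 0 <= (1 - q) ^+ m := exprn_ge0 m a_ge0.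
have am_le1 : (1 - q) ^+ m <= 1 by apply: exprn_ile1; lra.
have ra_le : r * (1 - q) <= 1 - q by rewrite ler_piMl.
have ra_ge0 : 0 <= r * (1 - q) := mulr_ge0 r_ge0 a_ge0.
have : r * (1 - q) * (1 - (1 - q) ^+ m) <= r * (1 - q).
  by rewrite ler_piMr // lerBlDr lerDl.
lra.
Qed.

Lemma weighted_sum_lt (R : numDomainType) (I : finType) (w f : I -> R) :
  (forall i, 0 < w i) -> (forall i, f i < 1) -> \sum_i w i != 0 ->
  \sum_i w i * f i < \sum_i w i.
Proof.
move=> w_gt0 f_lt1 sum_neq0.
apply: ltr_sum => [|i _]; last by rewrite gtr_pMr.
have [i _|I_empty] := pickP (@predT I).
  by apply/hasP; exists i; rewrite ?mem_index_enum.
by rewrite big_pred0 ?eqxx in sum_neq0.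
Qed.

Lemma EraBarE (R : realFieldType) (X : finType) (p : X -> R) n r alpha beta_t :
  EraBar p n r alpha beta_t =
  alpha * beta_t * \sum_y p y * (r * (1 - p y) * (1 - (1 - p y) ^+ n.-1)).
Proof. by rewrite /EraBar mulr_sumr; apply: eq_bigr => y _; ring. Qed.

Lemma EraBar_lt (R : realFieldType) (X : finType) (p : X -> R) n r alpha beta_t :
  (forall x, 0 < p x <= 1) -> \sum_x p x = 1 -> 0 <= r <= 1 ->
  0 < alpha * beta_t -> EraBar p n r alpha beta_t < alpha * beta_t.
Proof.
move=> p_range p_sum1 r_range ab_gt0.
rewrite EraBarE gtr_pMr // -[ltRHS]p_sum1.
apply: weighted_sum_lt => [x|x|]; last by rewrite p_sum1 oner_neq0.
- by case/andP: (p_range x).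
- exact: random_report_factor_lt1.
Qed.

Theorem lemma5 (R : realFieldType) (X : finType) (p p' : X -> R) (n : nat)
  (r alpha : R) (beta : R -> R) (t_i : R) (c_eH c_eL : R) :
  (2 <= n)%N ->
  (forall x, 0 < p x < 1) ->
  (forall x, 0 < p' x < 1) ->
  \sum_(x : X) p x = 1 ->
  0 <= r <= 1 ->
  0 < alpha ->
  (forall t, 0 < beta t) ->
  (forall s t, s < t -> beta t < beta s) ->
  c_eL < c_eH ->
  RefBar p p' n r alpha (beta t_i) - alpha * beta t_i >= c_eH - c_eL ->
  RefBar p p' n r alpha (beta t_i) - c_eH > EraBar p n r alpha (beta t_i) - c_eL.
Proof.
move=> _ p_range _ p_sum1 r_range alpha_gt0 beta_gt0 _ _ A1.
have p_range' x : 0 < p x <= 1 by case/andP: (p_range x) => -> /ltW.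
have := @EraBar_lt R X p n r alpha (beta t_i) p_range' p_sum1 r_range
  (mulr_gt0 alpha_gt0 (beta_gt0 t_i)).
lra.
Qed.
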